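(* Let $(G,+)$ be a finite abelian group with identity $0$, and let $\cdot$ be a binary operation on $G$ making $(G,+,\cdot)$ a commutative associative (not necessarily unital) ring in which every element has an inverse under the circle operation $x\circ y=x+y+x\cdot y$. For $g\in G$ define $\tau_g:G\to G$ by $\tau_g(x)=g\circ x$, and let $T=\{\tau_g: g\in G\}$, a regular abelian subgroup of $\mathrm{Hol}(G)$. Then for each prime $p$ dividing $|G|$, the Sylow $p$-subgroup of $T$ is $T_p=\{\tau_g: g\in G_p\}$, where $G_p$ is the Sylow $p$-subgroup of $(G,+)$.
   Context: $\mathrm{Hol}(G)=\rho(G)\cdot\mathrm{Aut}(G)\subseteq\mathrm{Perm}(G)$ is the holomorph of $G$, with group operation composition of permutations. Under the hypotheses, $(G,\circ)$ is an abelian group with identity $0$, and $T$ (under composition) is a regular abelian subgroup of $\mathrm{Hol}(G)$, with $\tau_g\circ\tau_h=\tau_{g\circ h}$. *)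

From mathcomp Require Import all_boot all_order all_algebra all_fingroup all_solvable.
Set Implicit Arguments. Unset Strict Implicit. Unset Printing Implicit Defensive.
Import GRing.Theory.
Local Open Scope ring_scope.

Definition comm_rng_mul (V : finZmodType) (mul : V -> V -> V) : Prop :=
  [/\ associative mul, commutative mul,
      left_distributive mul +%R & right_distributive mul +%R].

Definition circle (V : finZmodType) (mul : V -> V -> V) (x y : V) : V :=
  x + y + mul x y.

Definition circle_invertible (V : finZmodType) (mul : V -> V -> V) : Prop :=
  forall x : V, exists y : V, circle mul x y = 0 /\ circle mul y x = 0.

Definition tau_set (V : finZmodType) (mul : V -> V -> V) (A : {set V})
  : {set {perm V}} :=
  [set s : {perm V} | [exists g in A, [forall x, s x == circle mul g x]]].

Definition T_set (V : finZmodType) (mul : V -> V -> V) : {set {perm V}} :=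
  tau_set mul [set: V].

From mathcomp Require Import all_boot all_order all_algebra all_fingroup all_solvable.
Set Implicit Arguments. Unset Strict Implicit. Unset Printing Implicit Defensive.
Import GRing.Theory FinRing.Theory.

(* The map g |-> tau_g is an isomorphism from the circle group (G, o) onto T,
   and it is also a bijection between subsets. A Sylow p-subgroup G_p of (G, +)
   is an ideal of the ring (the additive order of g.h divides that of g), so it
   is closed under o and tau maps it onto a subgroup of T of order |G_p|, i.e.
   a Sylow p-subgroup of T. As T is abelian, this Sylow subgroup is unique. *)

Local Open Scope group_scope.

Lemma abelian_Sylow_uniq (gT : finGroupType) (G P Q : {group gT}) p :
  abelian G -> p.-Sylow(G) P -> p.-Sylow(G) Q -> P :=: Q.
Proof.
move=> cGG sylP sylQ.
have nPG : P <| G by rewrite -sub_abelian_normal ?(pHall_sub sylP).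
have nQG : Q <| G by rewrite -sub_abelian_normal ?(pHall_sub sylQ).
by rewrite -(normal_Hall_pcore sylP nPG) (normal_Hall_pcore sylQ nQG).
Qed.

Section CircleGroup.

Variables (V : finZmodType) (mul : V -> V -> V).
Hypothesis rngV : comm_rng_mul mul.

Local Notation "x .* y" := (mul x y) (at level 40, left associativity).
Local Notation "x 'o' y" := (circle mul x y) (at level 50, left associativity).

Lemma rng_mul0l x : 0%R .* x = 0%R.
Proof.
case: rngV => _ _ mulDl _.
by apply: (@addrI _ (0%R .* x)); rewrite -mulDl !addr0.
Qed.

Lemma rng_mul0r x : x .* 0%R = 0%R.
Proof. by case: rngV => _ mulC _ _; rewrite mulC rng_mul0l. Qed.

Lemma rng_mulnl x y n : (x *+ n)%R .* y = (x .* y *+ n)%R.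
Proof.
case: rngV => _ _ mulDl _.
by elim: n => [|n IHn]; rewrite ?mulr0n ?rng_mul0l // !mulrS mulDl IHn.
Qed.

Lemma circle0l x : 0%R o x = x.
Proof. by rewrite /circle rng_mul0l add0r addr0. Qed.

Lemma circleC x y : x o y = y o x.
Proof. by case: rngV => _ mulC _ _; rewrite /circle mulC (addrC x). Qed.

Lemma circleA x y z : x o y o z = x o (y o z).
Proof.
case: rngV => mulA _ mulDl mulDr; rewrite /circle !mulDl !mulDr mulA.
rewrite -!addrA; do 2!congr (_ + _)%R.
rewrite [LHS]addrCA; congr (_ + _)%R.
by rewrite [RHS]addrCA; congr (_ + _)%R; apply: addrCA.
Qed.

Section Ideal.

Variables (p : nat) (Gp : {group V}).
Hypothesis sylGp : p.-Sylow([set: V]) Gp.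

Lemma Sylow_rng_ideal g h : g \in Gp -> g .* h \in Gp.
Proof.
move=> Gg; have nGpV : Gp <| [set: V].
  by rewrite -sub_abelian_normal ?zmod_abelian ?subsetT.
rewrite (mem_normal_Hall sylGp nGpV) ?inE //.
apply: pnat_dvd (mem_p_elt (pHall_pgroup sylGp) Gg).
by rewrite order_dvdn zmodXgE -rng_mulnl -zmodXgE expg_order rng_mul0l.
Qed.

Lemma Sylow_circle_closed : {in Gp &, forall g h, g o h \in Gp}.
Proof.
move=> g h Gg Gh; rewrite /circle.
by rewrite -!zmodMgE !groupM // Sylow_rng_ideal.
Qed.

End Ideal.

Hypothesis circV : circle_invertible mul.

Lemma circle_inj g : injective (circle mul g).
Proof.
move=> x y gx_gy; have [g' [_ g'g]] := circV g.
by rewrite -(circle0l x) -(circle0l y) -g'g !circleA gx_gy.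
Qed.

Definition tau g : {perm V} := perm (@circle_inj g).

Lemma tauE g x : tau g x = g o x.
Proof. by rewrite permE. Qed.

Lemma tau_setE (A : {set V}) : tau_set mul A = tau @: A.
Proof.
apply/setP=> s; rewrite inE; apply/existsP/imsetP.
  by case=> g /andP[Ag /forallP sE]; exists g => //; apply/permP=> x;
    rewrite tauE; apply/eqP.
by case=> g Ag ->; exists g; rewrite Ag; apply/forallP=> x; rewrite tauE.
Qed.

Lemma tau_inj : injective tau.
Proof. by move=> g h /permP/(_ 0%R); rewrite !tauE /circle !rng_mul0r !addr0. Qed.

Lemma card_tau_set (A : {set V}) : #|tau_set mul A| = #|A|.
Proof. by rewrite tau_setE (card_imset _ tau_inj). Qed.

Lemma tau0 : tau 0%R = 1.
Proof. by apply/permP=> x; rewrite perm1 tauE circle0l. Qed.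

Lemma tauM g h : tau g * tau h = tau (h o g).
Proof. by apply/permP=> x; rewrite permM !tauE circleA. Qed.

Lemma group_set_tau_set (A : {set V}) :
  0%R \in A -> {in A &, forall g h, g o h \in A} -> group_set (tau_set mul A).
Proof.
move=> A0 AM; rewrite tau_setE; apply/group_setP; split.
  by rewrite -tau0 imset_f.
by move=> _ _ /imsetP[g Ag ->] /imsetP[h Ah ->]; rewrite tauM imset_f ?AM.
Qed.

Lemma group_set_T : group_set (T_set mul).
Proof. exact: group_set_tau_set (in_setT _) (fun _ _ _ _ => in_setT _). Qed.

Lemma abelian_T : abelian (T_set mul).
Proof.
apply/centsP; rewrite /T_set tau_setE.
by move=> _ /imsetP[g _ ->] _ /imsetP[h _ ->]; rewrite /commute !tauM circleC.
Qed.

End CircleGroup.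

Theorem corollary5p3 (V : finZmodType) (mul : V -> V -> V)
  (Hring : comm_rng_mul mul) (Hcirc : circle_invertible mul)
  (p : nat) (Hp : prime p) (Hdiv : p %| #|V|)
  (Gp : {group V}) (HGp : Gp \in 'Syl_p([set: V])) :
  forall P : {group {perm V}},
    P \in 'Syl_p(T_set mul) <-> (P : {set {perm V}}) = tau_set mul Gp.
Proof.
have sylGp : p.-Sylow([set: V]) Gp by rewrite inE in HGp.
pose T := Group (group_set_T Hring Hcirc).
pose Tp := Group (group_set_tau_set Hring Hcirc (group1 Gp)
                    (Sylow_circle_closed Hring sylGp)).
have sylTp : p.-Sylow(T) Tp.
  apply/pHallP; split; first by rewrite /= /T_set !tau_setE ?imsetS ?subsetT.
  by rewrite /= /T_set !card_tau_set //; case/pHallP: (sylGp).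
move=> P; rewrite inE; split=> [sylP | TpE].
  exact: (@abelian_Sylow_uniq _ T P Tp p (abelian_T Hring Hcirc) sylP sylTp).
by have -> : P = Tp by apply/val_inj.
Qed.
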